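(* Let $(X,d)$ be a metric space admitting a weak convergence $w$, and let $(G,\rho)$ be a proper metric group acting on $X$ such that the action is isometric, metrically compatible, and weakly compatible. Then $w$ is a weak convergence for $(X,d_{G,\rho})$.
   Context: A convergence $c$ on a set $X$ is a rule assigning at most one point of $X$ as the ''limit'' of each sequence in $X$, such that whenever a sequence has limit $x$, every subsequence also has limit $x$; we write $x_n\to x$ in $c$. A convergence $w$ on $X$ is a weak convergence for $(X,d)$ if: (W1) whenever $\{x_n\}$ and $y$ in $X$ satisfy $\sup_n d(x_n,y)<\infty$, there are a subsequence $\{n_k\}$ and $x\in X$ with $x_{n_k}\to x$ in $w$; (W2) whenever $x_n\to x$ in $w$, $d(x,y)\le\liminf_n d(x_n,y)$ for all $y\in X$; (W3) whenever $x_n\to x$ in $w$ and $d(x_n,y)\to d(x,y)$ for some $y\in X$, then $d(x_n,x)\to0$. $(G,\rho)$ is a metric group if $\rho$ is a left-invariant metric on the group $G$ whose topology makes $G$ a topological group; it is proper if, in addition, closed $\rho$-bounded sets are compact. The action is isometric if $d(g\cdot x,g\cdot x')=d(x,x')$; it is compatible with a convergence $c$ on $X$ if $x_n\to x$ in $c$ and $g_n\to g$ in $G$ imply $g_n\cdot x_n\to g\cdot x$ in $c$; metrically compatible means compatible with convergence in $d$, weakly compatible means compatible with $w$. The regularized metric is $d_{G,\rho}(x,x'):=\min_{g\in G}\sqrt{\rho^2(g,e)+d^2(x,g\cdot x')}$, where $e$ is the identity of $G$. *)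

From Stdlib Require Import Reals List.
From Coquelicot Require Import Coquelicot.
Open Scope R_scope.

Definition strictly_increasing (phi : nat -> nat) : Prop :=
  forall n, (phi n < phi (S n))%nat.

Definition is_convergence {X : Type} (c : (nat -> X) -> X -> Prop) : Prop :=
  (forall (u : nat -> X) (x y : X), c u x -> c u y -> x = y) /\
  (forall (u : nat -> X) (x : X) (phi : nat -> nat),
      strictly_increasing phi -> c u x -> c (fun n => u (phi n)) x).

Definition is_metric {X : Type} (d : X -> X -> R) : Prop :=
  (forall x y, 0 <= d x y) /\
  (forall x y, d x y = 0 <-> x = y) /\
  (forall x y, d x y = d y x) /\
  (forall x y z, d x z <= d x y + d y z).

Definition metric_conv {X : Type} (d : X -> X -> R) (u : nat -> X) (x : X) : Prop :=
  is_lim_seq (fun n => d (u n) x) 0.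

Definition is_weak_convergence {X : Type} (D : X -> X -> R)
    (w : (nat -> X) -> X -> Prop) : Prop :=
  (forall (u : nat -> X) (y : X),
      (exists M : R, forall n, D (u n) y <= M) ->
      exists (phi : nat -> nat) (x : X),
        strictly_increasing phi /\ w (fun k => u (phi k)) x) /\
  (forall (u : nat -> X) (x : X), w u x ->
      forall y : X, Rbar_le (Finite (D x y)) (LimInf_seq (fun n => D (u n) y))) /\
  (forall (u : nat -> X) (x y : X), w u x ->
      is_lim_seq (fun n => D (u n) y) (D x y) ->
      is_lim_seq (fun n => D (u n) x) 0).

Definition is_group {G : Type} (mul : G -> G -> G) (inv : G -> G) (e : G) : Prop :=
  (forall a b c, mul a (mul b c) = mul (mul a b) c) /\
  (forall a, mul e a = a) /\ (forall a, mul a e = a) /\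
  (forall a, mul (inv a) a = e) /\ (forall a, mul a (inv a) = e).

Definition mopen {G : Type} (rho : G -> G -> R) (U : G -> Prop) : Prop :=
  forall x, U x -> exists r, 0 < r /\ forall y, rho x y < r -> U y.

Definition mclosed {G : Type} (rho : G -> G -> R) (K : G -> Prop) : Prop :=
  mopen rho (fun x => ~ K x).

Definition mbounded {G : Type} (rho : G -> G -> R) (K : G -> Prop) : Prop :=
  exists (x0 : G) (M : R), forall x, K x -> rho x0 x <= M.

Definition mcompact {G : Type} (rho : G -> G -> R) (K : G -> Prop) : Prop :=
  forall (I : Type) (U : I -> G -> Prop),
    (forall i, mopen rho (U i)) ->
    (forall x, K x -> exists i, U i x) ->
    exists l : list I, forall x, K x -> exists i, In i l /\ U i x.

Definition is_metric_group {G : Type} (mul : G -> G -> G) (inv : G -> G) (e : G)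
    (rho : G -> G -> R) : Prop :=
  is_group mul inv e /\ is_metric rho /\
  (forall g a b, rho (mul g a) (mul g b) = rho a b) /\
  (forall a b eps, 0 < eps -> exists delta, 0 < delta /\
      forall a' b', rho a a' < delta -> rho b b' < delta ->
        rho (mul a b) (mul a' b') < eps) /\
  (forall a eps, 0 < eps -> exists delta, 0 < delta /\
      forall a', rho a a' < delta -> rho (inv a) (inv a') < eps).

Definition is_proper_metric_group {G : Type} (mul : G -> G -> G) (inv : G -> G)
    (e : G) (rho : G -> G -> R) : Prop :=
  is_metric_group mul inv e rho /\
  (forall K : G -> Prop, mclosed rho K -> mbounded rho K -> mcompact rho K).

Definition is_action {G X : Type} (mul : G -> G -> G) (e : G)
    (act : G -> X -> X) : Prop :=
  (forall x, act e x = x) /\ (forall g h x, act (mul g h) x = act g (act h x)).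

Definition is_isometric_action {G X : Type} (d : X -> X -> R) (act : G -> X -> X) : Prop :=
  forall g x x', d (act g x) (act g x') = d x x'.

Definition action_compatible {G X : Type} (rho : G -> G -> R) (act : G -> X -> X)
    (c : (nat -> X) -> X -> Prop) : Prop :=
  forall (u : nat -> X) (x : X) (gs : nat -> G) (g : G),
    c u x -> metric_conv rho gs g -> c (fun n => act (gs n) (u n)) (act g x).

(** The regularized metric d_{G,rho}(x,x') =
    inf_g sqrt(rho(g,e)^2 + d(x, g.x')^2) (the paper writes min). *)
Definition reg_metric {G X : Type} (d : X -> X -> R) (rho : G -> G -> R) (e : G)
    (act : G -> X -> X) (x x' : X) : R :=
  real (Glb_Rbar (fun r => exists g : G,
          r = sqrt (rho g e ^ 2 + d x (act g x') ^ 2))).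

From Stdlib Require Import Reals Lra Lia Classical ClassicalEpsilon FunctionalExtensionality List.
From Coquelicot Require Import Coquelicot.
Open Scope R_scope.

(* Near-minimisers [g_n] in the infimum defining [d_{G,rho}(x_n, y)] satisfy
   [rho(g_n, e) <= d_{G,rho}(x_n, y) + 1], so by properness a subsequence converges
   to some [g]; metric compatibility then gives [g_n y -> g y].
   (W1) [g_n^-1 x_n] is [d]-bounded, so (W1) for [d] and weak compatibility apply.
   (W2), (W3) If the costs [sqrt (rho(g_n,e)^2 + d(x_n, g_n y)^2)] are bounded
   by [c_n -> c], the triangle inequality bounds [limsup d(x_n, g y)] by
   [sqrt (c^2 - rho(g,e)^2)], while (W2) for [d] bounds [liminf d(x_n, g y)] from
   below by [d(x, g y)].  Hence [d_{G,rho}(x, y) <= sqrt (rho(g,e)^2 + d(x, g y)^2) <= c],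
   which gives (W2); under the hypothesis of (W3), [c = d_{G,rho}(x, y)] and the two
   bounds meet, so [d(x_n, g y) -> d(x, g y)], and (W3) for [d] together with
   [d_{G,rho} <= d] concludes. *)

Lemma strictly_increasing_comp (phi psi : nat -> nat) :
  strictly_increasing phi -> strictly_increasing psi ->
  strictly_increasing (fun k => phi (psi k)).
Proof.
  intros Hphi Hpsi k.
  assert (Hmono : forall m n, (m < n)%nat -> (phi m < phi n)%nat).
  { intros m n Hmn. induction Hmn as [|n _ IH]; [apply Hphi|specialize (Hphi n); lia]. }
  apply Hmono, Hpsi.
Qed.

Lemma is_lim_seq_extract (u : nat -> R) (l : Rbar) (phi : nat -> nat) :
  strictly_increasing phi -> is_lim_seq u l -> is_lim_seq (fun k => u (phi k)) l.
Proof.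
  intros Hphi. apply is_lim_seq_subseq, eventually_subseq, Hphi.
Qed.

Lemma strictly_increasing_extraction (P : nat -> nat -> Prop) :
  (forall k N, exists n, (N <= n)%nat /\ P k n) ->
  exists phi, strictly_increasing phi /\ forall k, P k (phi k).
Proof.
  intros H.
  destruct (choice (fun (kN : nat * nat) n => (snd kN <= n)%nat /\ P (fst kN) n))
    as [next Hnext].
  { intros [k N]. apply H. }
  pose (phi := fix phi k := match k with
                            | O => next (0, 0)%nat
                            | S k' => next (k, S (phi k'))
                            end).
  exists phi. split.
  - intros k. exact (proj1 (Hnext (S k, S (phi k)))).
  - intros [|k]; [exact (proj2 (Hnext (0, 0)%nat))|exact (proj2 (Hnext (S k, S (phi k))))].
Qed.

Lemma is_lim_seq_of_extractions (u : nat -> R) (l : R) :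
  (forall phi, strictly_increasing phi ->
     exists psi, strictly_increasing psi /\ is_lim_seq (fun k => u (phi (psi k))) l) ->
  is_lim_seq u l.
Proof.
  intros H. apply is_lim_seq_spec. intros eps. apply NNPP. intros Hfar.
  destruct (strictly_increasing_extraction (fun _ n => eps <= Rabs (u n - l)))
    as [phi [Hphi Hfar_phi]].
  { intros _ N. apply NNPP. intros Hnone. apply Hfar. exists N. intros n Hn.
    apply Rnot_le_lt. intros Hle. apply Hnone. now exists n. }
  destruct (H phi Hphi) as [psi [_ Hlim]].
  apply is_lim_seq_spec in Hlim. destruct (Hlim eps) as [N HN].
  specialize (HN N (le_n N)). specialize (Hfar_phi (psi N)). lra.
Qed.

Lemma LimInf_seq_lt_extraction (u : nat -> R) (a : R) :
  Rbar_lt (LimInf_seq u) a ->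
  exists c, c < a /\ exists phi, strictly_increasing phi /\ forall k, u (phi k) < c.
Proof.
  intros Hlt.
  assert (Hc : exists c, c < a /\ forall N, exists n, (N <= n)%nat /\ u n < c).
  { destruct (ex_LimInf_seq u) as [l Hli].
    rewrite (is_LimInf_seq_unique _ _ Hli) in Hlt.
    destruct l as [l| |]; simpl in Hlt, Hli; [|contradiction|].
    - exists ((l + a) / 2). split; [lra|].
      assert (Hpos : 0 < (a - l) / 2) by lra.
      intros N. destruct (proj1 (Hli (mkposreal _ Hpos)) N) as [n [Hn Hun]].
      exists n. split; [exact Hn|simpl in Hun; lra].
    - exists (a - 1). split; [lra|]. apply Hli. }
  destruct Hc as [c [Hca Hoften]]. exists c. split; [exact Hca|].
  apply (strictly_increasing_extraction (fun _ n => u n < c)). intros _. exact Hoften.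
Qed.

Lemma is_lim_seq_bounded (u : nat -> R) (l : R) :
  is_lim_seq u l -> exists M, forall n, u n <= M.
Proof.
  intros Hu. apply is_lim_seq_Reals in Hu.
  destruct (cauchy_bound u (CV_Cauchy u (exist _ l Hu))) as [M HM].
  exists M. intros n. apply HM. now exists n.
Qed.

Lemma is_lim_seq_LimInf_LimSup (u : nat -> R) (a : R) :
  Rbar_le a (LimInf_seq u) -> Rbar_le (LimSup_seq u) a -> is_lim_seq u a.
Proof.
  intros Hinf Hsup.
  assert (Hle := LimSup_LimInf_seq_le u).
  destruct (ex_LimInf_seq u) as [li Hli]. destruct (ex_LimSup_seq u) as [ls Hls].
  rewrite (is_LimInf_seq_unique _ _ Hli), (is_LimSup_seq_unique _ _ Hls) in *.
  assert (Einf : li = a) by (apply Rbar_le_antisym; eauto using Rbar_le_trans).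
  assert (Esup : ls = a) by (apply Rbar_le_antisym; eauto using Rbar_le_trans).
  subst. now apply is_LimSup_LimInf_lim_seq.
Qed.

Lemma is_lim_seq_inv_succ : is_lim_seq (fun n => / INR (S n)) 0.
Proof.
  assert (H := is_lim_seq_inv _ _ is_lim_seq_INR ltac:(discriminate)).
  now apply is_lim_seq_incr_1 in H.
Qed.

Lemma is_lim_seq_sq (u : nat -> R) (l : R) :
  is_lim_seq u l -> is_lim_seq (fun n => u n ^ 2) (l ^ 2).
Proof.
  intros Hu. apply is_lim_seq_ext with (u := fun n => u n * u n); [intros n; ring|].
  replace (Finite (l ^ 2)) with (Rbar_mult l l) by (simpl; f_equal; ring).
  now apply is_lim_seq_mult'.
Qed.

Lemma inv_succ_pos (n : nat) : 0 < / INR (S n) <= 1.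
Proof.
  rewrite S_INR. assert (0 <= INR n) by apply pos_INR. split.
  - apply Rinv_0_lt_compat; lra.
  - rewrite <- Rinv_1. apply Rinv_le_contravar; lra.
Qed.

Lemma le_sqrt_sum_sq (a b : R) : 0 <= a -> a <= sqrt (a ^ 2 + b ^ 2).
Proof.
  intros Ha. rewrite <- (sqrt_pow2 a Ha) at 1. apply sqrt_le_1_alt. nra.
Qed.

Lemma sqrt_sum_sq_le_sub (a b c : R) :
  0 <= a -> sqrt (b ^ 2 + a ^ 2) <= c -> a <= sqrt (c ^ 2 - b ^ 2).
Proof.
  intros Ha H.
  assert (Hs := sqrt_sqrt (b ^ 2 + a ^ 2) ltac:(nra)).
  assert (Hs0 := sqrt_pos (b ^ 2 + a ^ 2)).
  rewrite <- (sqrt_pow2 a Ha). apply sqrt_le_1_alt. nra.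
Qed.

Lemma sqrt_sum_sq_le (a b c : R) :
  0 <= a -> 0 <= b <= c -> a <= sqrt (c ^ 2 - b ^ 2) -> sqrt (b ^ 2 + a ^ 2) <= c.
Proof.
  intros Ha Hbc H.
  assert (Hs := sqrt_sqrt (c ^ 2 - b ^ 2) ltac:(nra)).
  rewrite <- (sqrt_pow2 c ltac:(lra)). apply sqrt_le_1_alt. nra.
Qed.

Lemma sqrt_sub_sq_le (a b c : R) :
  0 <= a -> 0 <= c -> c <= sqrt (b ^ 2 + a ^ 2) -> sqrt (c ^ 2 - b ^ 2) <= a.
Proof.
  intros Ha Hc H.
  assert (Hs := sqrt_sqrt (b ^ 2 + a ^ 2) ltac:(nra)).
  rewrite <- (sqrt_pow2 a Ha). apply sqrt_le_1_alt. nra.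
Qed.

Lemma Glb_Rbar_nonneg_spec (S : R -> Prop) (s0 : R) :
  S s0 -> (forall s, S s -> 0 <= s) ->
  0 <= real (Glb_Rbar S) /\ (forall s, S s -> real (Glb_Rbar S) <= s) /\
  (forall eps, 0 < eps -> exists s, S s /\ s < real (Glb_Rbar S) + eps).
Proof.
  intros Hs0 Hpos. destruct (Glb_Rbar_correct S) as [Hlb Hglb].
  assert (H0 : Rbar_le 0 (Glb_Rbar S)) by (apply Hglb; intros s Hs; apply Hpos, Hs).
  assert (Hfin : Rbar_le (Glb_Rbar S) s0) by apply Hlb, Hs0.
  destruct (Glb_Rbar S) as [m| |]; simpl in H0, Hfin |- *; try contradiction.
  split; [exact H0|]. split; [exact Hlb|].
  intros eps Heps. apply NNPP. intros Hnone.
  assert (Hm : Rbar_le (m + eps) m).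
  { apply Hglb. intros s Hs. apply Rnot_lt_le. intros Hlt. apply Hnone. now exists s. }
  simpl in Hm. lra.
Qed.

Section Proper.

Variables (G : Type) (rho : G -> G -> R).
Hypothesis Hrho : is_metric rho.

Definition heine_borel : Prop :=
  forall K : G -> Prop, mclosed rho K -> mbounded rho K -> mcompact rho K.

Definition cluster_point (gs : nat -> G) (g : G) : Prop :=
  forall r, 0 < r -> forall N, exists n, (N <= n)%nat /\ rho g (gs n) < r.

Lemma metric_conv_dist_cvg (gs : nat -> G) (g z : G) :
  metric_conv rho gs g -> is_lim_seq (fun n => rho (gs n) z) (rho g z).
Proof.
  destruct Hrho as [_ [_ [Hsym Htri]]]. intros Hg.
  apply is_lim_seq_le_le with (u := fun n => rho g z - rho (gs n) g)
                              (w := fun n => rho g z + rho (gs n) g).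
  - intros n. assert (H1 := Htri g (gs n) z). assert (H2 := Htri (gs n) g z).
    rewrite (Hsym g (gs n)) in H1. split; lra.
  - replace (Finite (rho g z)) with (Rbar_minus (rho g z) 0) by (simpl; f_equal; ring).
    apply is_lim_seq_minus'; [apply is_lim_seq_const|exact Hg].
  - replace (Finite (rho g z)) with (Rbar_plus (rho g z) 0) by (simpl; f_equal; ring).
    apply is_lim_seq_plus'; [apply is_lim_seq_const|exact Hg].
Qed.

Lemma mclosed_closed_ball (z : G) (M : R) : mclosed rho (fun h => rho h z <= M).
Proof.
  destruct Hrho as [_ [_ [_ Htri]]]. intros h Hh.
  exists (rho h z - M). split; [lra|]. intros h' Hh' Hle.
  specialize (Htri h h' z). lra.
Qed.

Lemma mbounded_closed_ball (z : G) (M : R) : mbounded rho (fun h => rho h z <= M).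
Proof.
  destruct Hrho as [_ [_ [Hsym _]]]. exists z, M. intros h Hh. now rewrite Hsym.
Qed.

(* Cover [K] by the balls [B(g, r)] around non-cluster points [g] that the
   sequence leaves for good after index [N]; a finite subcover misses every
   term of index beyond all the [N]'s. *)
Lemma mcompact_cluster_point (K : G -> Prop) (gs : nat -> G) :
  mcompact rho K -> (forall n, K (gs n)) -> exists g, cluster_point gs g.
Proof.
  destruct Hrho as [_ [Hzero [_ Htri]]]. intros HK HKgs. apply NNPP. intros Hnone.
  pose (U := fun (i : G * R * nat) h =>
               let '(g, r, N) := i in
               (forall n, (N <= n)%nat -> r <= rho g (gs n)) /\ rho g h < r).
  destruct (HK _ U) as [l Hl].
  - intros [[g r] N] h [Hfar Hh]. exists (r - rho g h). split; [lra|].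
    intros h' Hh'. split; [exact Hfar|]. specialize (Htri g h h'). lra.
  - intros g _. apply NNPP. intros Hnot. apply Hnone. exists g. intros r Hr N.
    apply NNPP. intros Hnear. apply Hnot. exists (g, r, N). split.
    + intros n Hn. apply Rnot_lt_le. intros Hlt. apply Hnear. now exists n.
    + now rewrite (proj2 (Hzero g g) eq_refl).
  - pose (Nmax := list_max (map (fun i : G * R * nat => snd i) l)).
    destruct (Hl (gs Nmax) (HKgs Nmax)) as [[[g r] N] [Hin [Hfar Hnear]]].
    assert (HN : (N <= Nmax)%nat).
    { apply (proj1 (Forall_forall _ _) (proj1 (list_max_le _ Nmax) (le_n _))).
      exact (in_map (fun i : G * R * nat => snd i) _ _ Hin). }
    specialize (Hfar Nmax HN). lra.
Qed.

Lemma cluster_point_extraction (gs : nat -> G) (g : G) :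
  cluster_point gs g ->
  exists phi, strictly_increasing phi /\ metric_conv rho (fun k => gs (phi k)) g.
Proof.
  destruct Hrho as [Hpos [_ [Hsym _]]]. intros Hg.
  destruct (strictly_increasing_extraction (fun k n => rho g (gs n) < / INR (S k)))
    as [phi [Hphi Hnear]].
  { intros k. apply Hg, inv_succ_pos. }
  exists phi. split; [exact Hphi|].
  apply is_lim_seq_le_le with (u := fun _ => 0) (w := fun k => / INR (S k)).
  - intros k. rewrite Hsym. split; [apply Hpos|left; apply Hnear].
  - apply is_lim_seq_const.
  - apply is_lim_seq_inv_succ.
Qed.

Lemma heine_borel_bounded_extraction (gs : nat -> G) (z : G) (M : R) :
  heine_borel -> (forall n, rho (gs n) z <= M) ->
  exists phi g, strictly_increasing phi /\ metric_conv rho (fun k => gs (phi k)) g.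
Proof.
  intros Hhb Hbd.
  destruct (mcompact_cluster_point (fun h => rho h z <= M) gs) as [g Hg];
    [apply Hhb; [apply mclosed_closed_ball|apply mbounded_closed_ball]|exact Hbd|].
  destruct (cluster_point_extraction gs g Hg) as [phi Hphi]. now exists phi, g.
Qed.

End Proper.

Lemma act_inv_r {G X : Type} (mul : G -> G -> G) (inv : G -> G) (e : G)
    (act : G -> X -> X) (g : G) (x : X) :
  is_group mul inv e -> is_action mul e act -> act g (act (inv g) x) = x.
Proof.
  intros [_ [_ [_ [_ Hmulinv]]]] [Hact_e Hact_mul].
  now rewrite <- Hact_mul, Hmulinv, Hact_e.
Qed.

Section RegularizedMetric.

Variables (X G : Type) (d : X -> X -> R) (w : (nat -> X) -> X -> Prop).
Variables (mul : G -> G -> G) (inv : G -> G) (e : G) (rho : G -> G -> R).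
Variable act : G -> X -> X.

Hypothesis Hd : is_metric d.
Hypothesis Hrho : is_metric rho.

Local Notation D := (reg_metric d rho e act).

Definition reg_cost (g : G) (x x' : X) : R := sqrt (rho g e ^ 2 + d x (act g x') ^ 2).

Lemma reg_metric_spec (x x' : X) :
  0 <= D x x' /\ (forall g, D x x' <= reg_cost g x x') /\
  (forall eps, 0 < eps -> exists g, reg_cost g x x' < D x x' + eps).
Proof.
  destruct (Glb_Rbar_nonneg_spec (fun r => exists g, r = reg_cost g x x') (reg_cost e x x'))
    as [Hpos [Hlb Happrox]].
  - now exists e.
  - intros s [g ->]. apply sqrt_pos.
  - split; [exact Hpos|]. split.
    + intros g. apply Hlb. now exists g.
    + intros eps Heps. destruct (Happrox eps Heps) as [s [[g ->] Hs]]. now exists g.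
Qed.

Lemma rho_le_reg_cost (g : G) (x x' : X) : rho g e <= reg_cost g x x'.
Proof. apply le_sqrt_sum_sq, Hrho. Qed.

Lemma dist_le_reg_cost (g : G) (x x' : X) : d x (act g x') <= reg_cost g x x'.
Proof. unfold reg_cost. rewrite Rplus_comm. apply le_sqrt_sum_sq, Hd. Qed.

Hypothesis Hact : is_action mul e act.

Lemma reg_metric_le_dist (x x' : X) : D x x' <= d x x'.
Proof.
  destruct Hact as [Hact_e _]. destruct (reg_metric_spec x x') as [_ [Hle _]].
  specialize (Hle e). unfold reg_cost in Hle.
  rewrite (proj2 (proj1 (proj2 Hrho) e e) eq_refl), Hact_e in Hle.
  replace (0 ^ 2 + d x x' ^ 2) with (d x x' ^ 2) in Hle by ring.
  now rewrite sqrt_pow2 in Hle by apply Hd.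
Qed.

Hypothesis Hmet : action_compatible rho act (metric_conv d).

Lemma orbit_conv (gs : nat -> G) (g : G) (y : X) :
  metric_conv rho gs g -> is_lim_seq (fun n => d (act (gs n) y) (act g y)) 0.
Proof.
  intros Hg. apply (Hmet (fun _ => y) y gs g); [|exact Hg].
  unfold metric_conv. rewrite (proj2 (proj1 (proj2 Hd) y y) eq_refl).
  apply is_lim_seq_const.
Qed.

Lemma LimSup_dist_orbit_le (u : nat -> X) (gs : nat -> G) (g : G) (y : X)
    (c : nat -> R) (cl : R) :
  metric_conv rho gs g -> is_lim_seq c cl ->
  (forall n, reg_cost (gs n) (u n) y <= c n) ->
  rho g e <= cl /\
  Rbar_le (LimSup_seq (fun n => d (u n) (act g y))) (sqrt (cl ^ 2 - rho g e ^ 2)).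
Proof.
  intros Hg Hc Hcost.
  assert (Hrho_lim := metric_conv_dist_cvg G rho Hrho gs g e Hg).
  assert (Hb : rho g e <= cl).
  { apply (is_lim_seq_le (fun n => rho (gs n) e) c (rho g e) cl); [|exact Hrho_lim|exact Hc].
    intros n. eapply Rle_trans; [apply rho_le_reg_cost|apply Hcost]. }
  split; [exact Hb|].
  assert (Hb0 : 0 <= rho g e) by apply Hrho.
  pose (t n := sqrt (c n ^ 2 - rho (gs n) e ^ 2) + d (act (gs n) y) (act g y)).
  assert (Ht : is_lim_seq t (sqrt (cl ^ 2 - rho g e ^ 2))).
  { replace (Finite (sqrt (cl ^ 2 - rho g e ^ 2)))
      with (Rbar_plus (sqrt (cl ^ 2 - rho g e ^ 2)) 0) by (simpl; f_equal; ring).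
    apply is_lim_seq_plus'; [|exact (orbit_conv gs g y Hg)].
    apply (is_lim_seq_continuous sqrt (fun n => c n ^ 2 - rho (gs n) e ^ 2));
      [apply continuity_pt_sqrt; nra|].
    apply (is_lim_seq_minus' (fun n => c n ^ 2) (fun n => rho (gs n) e ^ 2));
      apply is_lim_seq_sq; assumption. }
  rewrite <- (is_LimSup_seq_unique _ _ (is_lim_LimSup_seq _ _ Ht)).
  apply LimSup_le. exists O. intros n _. unfold t.
  destruct Hd as [Hd0 [_ [_ Htri]]].
  specialize (Htri (u n) (act (gs n) y) (act g y)).
  assert (Hn := sqrt_sum_sq_le_sub _ _ _ (Hd0 (u n) (act (gs n) y)) (Hcost n)).
  lra.
Qed.

Hypothesis Hw_weak : is_weak_convergence d w.

Lemma reg_cost_le_limit (u : nat -> X) (x : X) (gs : nat -> G) (g : G) (y : X)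
    (c : nat -> R) (cl : R) :
  w u x -> metric_conv rho gs g -> is_lim_seq c cl ->
  (forall n, reg_cost (gs n) (u n) y <= c n) -> reg_cost g x y <= cl.
Proof.
  intros Hux Hg Hc Hcost.
  destruct (LimSup_dist_orbit_le u gs g y c cl Hg Hc Hcost) as [Hb Hsup].
  assert (Hinf := proj1 (proj2 Hw_weak) u x Hux (act g y)).
  assert (Hle := LimSup_LimInf_seq_le (fun n => d (u n) (act g y))).
  assert (Ha : Rbar_le (d x (act g y)) (sqrt (cl ^ 2 - rho g e ^ 2)))
    by eauto using Rbar_le_trans.
  apply sqrt_sum_sq_le; [apply Hd|split; [apply Hrho|exact Hb]|exact Ha].
Qed.

Lemma dist_orbit_cvg (u : nat -> X) (x : X) (gs : nat -> G) (g : G) (y : X)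
    (c : nat -> R) (cl : R) :
  w u x -> metric_conv rho gs g -> is_lim_seq c cl ->
  (forall n, reg_cost (gs n) (u n) y <= c n) -> cl <= reg_cost g x y ->
  is_lim_seq (fun n => d (u n) (act g y)) (d x (act g y)).
Proof.
  intros Hux Hg Hc Hcost Hcl.
  destruct (LimSup_dist_orbit_le u gs g y c cl Hg Hc Hcost) as [Hb Hsup].
  apply is_lim_seq_LimInf_LimSup; [exact (proj1 (proj2 Hw_weak) u x Hux (act g y))|].
  eapply Rbar_le_trans; [exact Hsup|].
  apply sqrt_sub_sq_le; [apply Hd| |exact Hcl].
  eapply Rle_trans; [apply Hrho|exact Hb].
Qed.

Hypothesis Hw_conv : is_convergence w.
Hypothesis Hgrp : is_group mul inv e.
Hypothesis Hhb : heine_borel G rho.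
Hypothesis Hiso : is_isometric_action d act.
Hypothesis Hweak : action_compatible rho act w.

Lemma reg_bounded_has_weak_subseq (u : nat -> X) (y : X) :
  (exists M, forall n, D (u n) y <= M) ->
  exists phi x, strictly_increasing phi /\ w (fun k => u (phi k)) x.
Proof.
  intros [M HM].
  destruct (choice (fun n g => reg_cost g (u n) y < M + 1)) as [gs Hgs].
  { intros n. destruct (reg_metric_spec (u n) y) as [_ [_ Happrox]].
    destruct (Happrox 1 Rlt_0_1) as [g Hg]. exists g. specialize (HM n). lra. }
  pose (v n := act (inv (gs n)) (u n)).
  destruct (proj1 Hw_weak v y) as [psi [x0 [Hpsi Hv]]].
  { exists (M + 1). intros n. unfold v.
    rewrite <- (Hiso (gs n)), (act_inv_r mul inv e act) by assumption.
    eapply Rle_trans; [apply dist_le_reg_cost|left; apply Hgs]. }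
  destruct (heine_borel_bounded_extraction G rho Hrho (fun k => gs (psi k)) e (M + 1) Hhb)
    as [chi [g [Hchi Hg]]].
  { intros k. eapply Rle_trans; [apply rho_le_reg_cost|left; apply Hgs]. }
  exists (fun k => psi (chi k)), (act g x0).
  split; [now apply strictly_increasing_comp|].
  replace (fun k => u (psi (chi k)))
    with (fun k => act (gs (psi (chi k))) (v (psi (chi k)))).
  - exact (Hweak _ _ _ _ (proj2 Hw_conv _ _ _ Hchi Hv) Hg).
  - apply functional_extensionality. intros k. now apply (act_inv_r mul inv e act).
Qed.

Lemma reg_metric_le_LimInf (u : nat -> X) (x : X) (y : X) :
  w u x -> Rbar_le (D x y) (LimInf_seq (fun n => D (u n) y)).
Proof.
  intros Hux. apply Rbar_not_lt_le. intros Hlt.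
  destruct (LimInf_seq_lt_extraction _ _ Hlt) as [c [Hc [phi [Hphi Hbelow]]]].
  destruct (choice (fun k g => reg_cost g (u (phi k)) y < c)) as [gs Hgs].
  { intros k. destruct (reg_metric_spec (u (phi k)) y) as [_ [_ Happrox]].
    destruct (Happrox (c - D (u (phi k)) y)) as [g Hg]; [specialize (Hbelow k); lra|].
    exists g. lra. }
  destruct (heine_borel_bounded_extraction G rho Hrho gs e c Hhb) as [psi [g [Hpsi Hg]]].
  { intros k. eapply Rle_trans; [apply rho_le_reg_cost|left; apply Hgs]. }
  assert (Hcost : reg_cost g x y <= c).
  { apply (reg_cost_le_limit (fun k => u (phi (psi k))) x (fun k => gs (psi k)) g y
             (fun _ => c) c).
    - exact (proj2 Hw_conv _ _ _ Hpsi (proj2 Hw_conv _ _ _ Hphi Hux)).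
    - exact Hg.
    - apply is_lim_seq_const.
    - intros k. left. apply Hgs. }
  destruct (reg_metric_spec x y) as [_ [Hle _]]. specialize (Hle g). lra.
Qed.

Lemma reg_metric_cvg_of_weak_cvg (u : nat -> X) (x y : X) :
  w u x -> is_lim_seq (fun n => D (u n) y) (D x y) -> is_lim_seq (fun n => D (u n) x) 0.
Proof.
  intros Hux Hlim. apply is_lim_seq_of_extractions. intros phi Hphi.
  destruct (is_lim_seq_bounded _ _ Hlim) as [M HM].
  destruct (choice (fun n g => reg_cost g (u (phi n)) y < D (u (phi n)) y + / INR (S n)))
    as [gs Hgs].
  { intros n. apply (reg_metric_spec (u (phi n)) y), inv_succ_pos. }
  destruct (heine_borel_bounded_extraction G rho Hrho gs e (M + 1) Hhb)
    as [psi [g [Hpsi Hg]]].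
  { intros n. assert (Hn := inv_succ_pos n). specialize (HM (phi n)).
    assert (Hr := rho_le_reg_cost (gs n) (u (phi n)) y). specialize (Hgs n). lra. }
  exists psi. split; [exact Hpsi|].
  pose (v k := u (phi (psi k))).
  assert (Hv : w v x) by exact (proj2 Hw_conv _ _ _ Hpsi (proj2 Hw_conv _ _ _ Hphi Hux)).
  assert (Hc : is_lim_seq (fun k => D (v k) y + / INR (S (psi k))) (D x y)).
  { replace (Finite (D x y)) with (Rbar_plus (D x y) 0) by (simpl; f_equal; ring).
    apply is_lim_seq_plus'.
    - exact (is_lim_seq_extract _ _ _ (strictly_increasing_comp _ _ Hphi Hpsi) Hlim).
    - exact (is_lim_seq_extract _ _ _ Hpsi is_lim_seq_inv_succ). }
  assert (Hdist : is_lim_seq (fun k => d (v k) (act g y)) (d x (act g y))).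
  { apply (dist_orbit_cvg v x (fun k => gs (psi k)) g y _ _ Hv Hg Hc).
    - intros k. left. apply Hgs.
    - apply reg_metric_spec. }
  apply is_lim_seq_le_le with (u := fun _ => 0) (w := fun k => d (v k) x).
  - intros k. split; [apply reg_metric_spec|now apply reg_metric_le_dist].
  - apply is_lim_seq_const.
  - exact (proj2 (proj2 Hw_weak) v x (act g y) Hv Hdist).
Qed.

End RegularizedMetric.

Theorem proposition2p11
  (X : Type) (d : X -> X -> R) (w : (nat -> X) -> X -> Prop)
  (G : Type) (mul : G -> G -> G) (inv : G -> G) (e : G) (rho : G -> G -> R)
  (act : G -> X -> X)
  (Hd : is_metric d)
  (Hw_conv : is_convergence w)
  (Hw_weak : is_weak_convergence d w)
  (HG : is_proper_metric_group mul inv e rho)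
  (Hact : is_action mul e act)
  (Hiso : is_isometric_action d act)
  (Hmet : action_compatible rho act (metric_conv d))
  (Hweak : action_compatible rho act w) :
  is_weak_convergence (reg_metric d rho e act) w.
Proof.
  destruct HG as [[Hgrp [Hrho _]] Hhb].
  split; [|split]; intros.
  - eapply reg_bounded_has_weak_subseq; eassumption.
  - eapply reg_metric_le_LimInf; eassumption.
  - eapply reg_metric_cvg_of_weak_cvg; eassumption.
Qed.
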